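(* Let $p$ be an odd prime, $\zeta_p = e^{2\pi i/p}$, and for $1 \leq i \leq p-1$ let $$\rho_i = \sqrt{2} - \frac{2\sqrt{2}}{(1+\sqrt{2})^{-2/p}\zeta_p^i + 1},$$ where $(1+\sqrt{2})^{-2/p}$ is the positive real value (these are the non-real roots of $\frac{1}{2\sqrt{2}}\left((1+\sqrt{2})(x+\sqrt{2})^p - (1-\sqrt{2})(x-\sqrt{2})^p\right)$). Then $$\prod_{i=1}^{p-1} |\operatorname{Im}(\rho_i)| \geq p\, 2^{\frac{p-3}{2}}.$$ *)

From Stdlib Require Import Reals List.
From Coquelicot Require Import Coquelicot.
Open Scope R_scope.

Definition zeta (p : nat) : C := (cos (2 * PI / INR p), sin (2 * PI / INR p)).

Definition rho (p i : nat) : C :=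
  Cminus (RtoC (sqrt 2))
    (Cdiv (RtoC (2 * sqrt 2))
       (Cplus (Cmult (RtoC (Rpower (1 + sqrt 2) (- 2 / INR p))) (pow_n (zeta p) i))
              (RtoC 1))).

Definition prod_abs_im_rho (p : nat) : R :=
  fold_right Rmult 1 (map (fun i => Rabs (Im (rho p i))) (seq 1 (p - 1))).

(* Write r = (1 + sqrt 2)^(-2/p) and theta_k = 2 pi k / p.  A direct computation gives
   |Im rho_k| = 2 sqrt 2 r |sin theta_k| / |-r - zeta^k|^2.  The cyclotomic identity
   prod_{k=1}^{n-1} (x - zeta^k) = 1 + x + ... + x^(n-1) yields, for real x,
   prod_{k=1}^{n-1} |x - zeta^k|^2 = ((x^n - 1) / (x - 1))^2.  At x = -r the right-hand side
   is ((1 + r^p) / (1 + r))^2 = 8 r^p / (1 + r)^2, because r^p = (1 + sqrt 2)^(-2); at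
   x = 1 and x = -1 it gives prod |sin theta_k| = p / 2^(p-1).  Altogether
   prod |Im rho_k| = p 2^((p-1)/2) (1 + r)^2 / (8 r), and (1 + r)^2 >= 4 r. *)

From Stdlib Require Import Reals ZArith Znumtheory Lra Lia List.
From Coquelicot Require Import Coquelicot.
From mathcomp Require all_boot all_algebra complex ring Rstruct.
Open Scope R_scope.

Definition prodR (f : nat -> R) (l : list nat) : R := fold_right Rmult 1 (map f l).
Definition angle (n k : nat) : R := 2 * PI * INR k / INR n.
(* [root_sqdist n x k] is |x - e^(2 pi i k / n)|^2 for real [x]. *)
Definition root_sqdist (n : nat) (x : R) (k : nat) : R := x ^ 2 - 2 * x * cos (angle n k) + 1.
Definition rho_radius (p : nat) : R := Rpower (1 + sqrt 2) (- 2 / INR p).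

Lemma prodR_mul f g l : prodR (fun k => f k * g k) l = prodR f l * prodR g l.
Proof. unfold prodR; induction l as [|a l IH]; simpl; [ring | rewrite IH; ring]. Qed.

Lemma prodR_scale c f l : prodR (fun k => c * f k) l = c ^ length l * prodR f l.
Proof. unfold prodR; induction l as [|a l IH]; simpl; [ring | rewrite IH; ring]. Qed.

Lemma prodR_ext f g l : (forall k, f k = g k) -> prodR f l = prodR g l.
Proof. intros Hfg; unfold prodR; now rewrite (map_ext f g). Qed.

Lemma prodR_nonneg f l : (forall k, 0 <= f k) -> 0 <= prodR f l.
Proof.
  intros Hf; unfold prodR; induction l as [|a l IH]; simpl; [lra | now apply Rmult_le_pos].
Qed.

Lemma pow_opp_odd x n : Nat.Odd n -> (- x) ^ n = - x ^ n.
Proof.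
  intros [q ->]. replace (- x) with (-1 * x) by ring.
  rewrite Rpow_mult_distr. replace (2 * q + 1)%nat with (S (2 * q)) by lia.
  rewrite pow_1_odd. ring.
Qed.

Lemma angle_0 n : angle n 0 = 0.
Proof. unfold angle; simpl; unfold Rdiv; ring. Qed.

Lemma angle_S n k : (0 < n)%nat -> angle n (S k) = angle n 1 + angle n k.
Proof. intros. unfold angle. rewrite S_INR. simpl. field. apply not_0_INR. lia. Qed.

Lemma angle_n n : (0 < n)%nat -> angle n n = 2 * PI.
Proof. intros. unfold angle. field. apply not_0_INR. lia. Qed.

Lemma cos_angle_neq_1 n k : (0 < k < n)%nat -> cos (angle n k) <> 1.
Proof.
  intros Hk.
  assert (Hk0 : 0 < INR k) by (apply lt_0_INR; lia).
  assert (Hkn : INR k < INR n) by (apply lt_INR; lia).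
  set (t := PI * INR k / INR n).
  assert (Ht : 0 < t < PI).
  { unfold t. pose proof PI_RGT_0. split.
    - apply Rdiv_lt_0_compat; nra.
    - apply Rmult_lt_reg_r with (INR n); [lra|].
      unfold Rdiv. rewrite Rmult_assoc, Rinv_l by lra. nra. }
  replace (angle n k) with (2 * t) by (unfold angle, t, Rdiv; ring).
  rewrite cos_2a_sin. pose proof (sin_gt_0 t (proj1 Ht) (proj2 Ht)). nra.
Qed.

Lemma root_sqdist_cos_sin n x k :
  root_sqdist n x k = (x - cos (angle n k)) ^ 2 + sin (angle n k) ^ 2.
Proof.
  unfold root_sqdist. pose proof (sin2_cos2 (angle n k)) as Hsc. unfold Rsqr in Hsc. nra.
Qed.

Lemma root_sqdist_pos n x k : -1 < x < 1 -> 0 < root_sqdist n x k.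
Proof.
  intros Hx; unfold root_sqdist.
  pose proof (COS_bound (angle n k)).
  destruct (Rle_or_lt 0 x); nra.
Qed.

Module CyclotomicProduct.
Import all_boot all_algebra complex ring Rstruct GRing.Theory Num.Theory.

Section Products.
Local Open Scope ring_scope.
Local Open Scope complex_scope.

Lemma prod_sub_prim_root {F : fieldType} {n : nat} {z : F} : n.-primitive_root z -> forall y,
  \prod_(1 <= k < n) (y - z ^+ k) = \sum_(k < n) y ^+ k.
Proof.
move=> prim_z y; have n_gt0 := prim_order_gt0 prim_z.
have := factor_Xn_sub_1 prim_z.
rewrite big_ltn // expr0 subrX1 -polyC1 => /(mulfI (negbT (polyXsubC_eq0 1))).
move=> /(congr1 (horner^~ y)); rewrite horner_prod horner_sum.
under eq_bigr do rewrite hornerXsubC.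
by under [X in _ = X -> _]eq_bigr do rewrite hornerXn.
Qed.

Lemma mul_subc_conjc (F : rcfType) (x : F) (w : F[i]) :
  (x%:C - w) * (x%:C - w^*) = ((x - complex.Re w) ^+ 2 + complex.Im w ^+ 2)%:C.
Proof. by case: w => a b; simpc; congr (_ +i* _); ring. Qed.

Lemma prod_sqr_sub_prim_root {F : rcfType} {n : nat} {z : F[i]} (x : F) : n.-primitive_root z ->
  \prod_(1 <= k < n) ((x - complex.Re (z ^+ k)) ^+ 2 + complex.Im (z ^+ k) ^+ 2)
  = (\sum_(k < n) x ^+ k) ^+ 2.
Proof.
move=> prim_z; apply: (@complexI F).
have prim_zc : n.-primitive_root z^* by rewrite fmorph_primitive_root.
have sum_C : ((\sum_(k < n) x ^+ k) ^+ 2)%:C = (\sum_(k < n) x%:C ^+ k) ^+ 2.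
  by rewrite rmorphXn rmorph_sum; congr (_ ^+ 2); apply: eq_bigr => k _; rewrite rmorphXn.
rewrite sum_C expr2 -{1}(prod_sub_prim_root prim_z).
rewrite -(prod_sub_prim_root prim_zc) -big_split rmorph_prod.
by apply: eq_bigr => k _; rewrite -rmorphXn; apply: esym; apply: mul_subc_conjc.
Qed.

Lemma prodR_big f m n : prodR f (List.seq m (n - m)) = \prod_(m <= k < n) f k.
Proof.
rewrite /index_iota; move: (n - m)%N => l.
by elim: l m => [|l IH] m; rewrite /= ?big_nil ?big_cons -?IH.
Qed.

Definition zeta_c (n : nat) : R[i] := cos (angle n 1) +i* sin (angle n 1).

Lemma zeta_c_exp n k : (0 < n)%coq_nat -> zeta_c n ^+ k = cos (angle n k) +i* sin (angle n k).
Proof.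
move=> n_gt0; elim: k => [|k IH]; first by rewrite expr0 angle_0 cos_0 sin_0.
rewrite exprS IH /zeta_c; simpc; rewrite (angle_S n k n_gt0) cos_plus sin_plus.
by congr (_ +i* _); rewrite ?RealsE; ring.
Qed.

Lemma zeta_c_prim n : (0 < n)%coq_nat -> n.-primitive_root (zeta_c n).
Proof.
move=> n_gt0; have /ltP n_gt0' := n_gt0.
have zn1 : zeta_c n ^+ n = 1 by rewrite zeta_c_exp // angle_n // cos_2PI sin_2PI.
have [m prim_m m_dvd_n] := prim_order_exists n_gt0' zn1.
have m_gt0 := prim_order_gt0 prim_m.
have /orP[/eqP m_n | m_lt_n] : (m == n) || (m < n)%N by rewrite -leq_eqVlt dvdn_leq.
  by rewrite m_n in prim_m.
have := prim_expr_order prim_m; rewrite zeta_c_exp // => /(congr1 (@complex.Re R)) /= cos1.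
by exfalso; apply: (cos_angle_neq_1 n m) cos1; split; apply/ltP.
Qed.

Lemma prod_root_sqdist n x : (0 < n)%coq_nat ->
  \prod_(1 <= k < n) root_sqdist n x k = (\sum_(k < n) x ^+ k) ^+ 2.
Proof.
move=> n_gt0; rewrite -(prod_sqr_sub_prim_root x (zeta_c_prim _ n_gt0)).
by apply: eq_bigr => k _; rewrite zeta_c_exp // root_sqdist_cos_sin !RpowE.
Qed.

End Products.

(* [%coq_nat] keeps Peano's [Nat.sub], the subtraction used in [prod_abs_im_rho]. *)
Lemma prod_root_sqdist_mul n x : (0 < n)%coq_nat ->
  prodR (root_sqdist n x) (List.seq 1 (n - 1)%coq_nat) * (x - 1) ^ 2 = (x ^ n - 1) ^ 2.
Proof.
move=> n_gt0; rewrite prodR_big prod_root_sqdist // !RealsE.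
by rewrite -exprMn mulrC -subrX1.
Qed.

Lemma prod_root_sqdist_at_1 n : (0 < n)%coq_nat ->
  prodR (root_sqdist n 1) (List.seq 1 (n - 1)%coq_nat) = INR n ^ 2.
Proof.
move=> n_gt0; rewrite prodR_big prod_root_sqdist // !RealsE.
by under eq_bigr do rewrite expr1n; rewrite sumr_const card_ord.
Qed.

End CyclotomicProduct.

Lemma zeta_angle p : zeta p = (cos (angle p 1), sin (angle p 1)).
Proof. unfold zeta, angle; simpl INR; now rewrite Rmult_1_r. Qed.

Lemma pow_n_zeta p k : (0 < p)%nat -> pow_n (zeta p) k = (cos (angle p k), sin (angle p k)).
Proof.
  intros Hp; induction k as [|k IH].
  - simpl. now rewrite angle_0, cos_0, sin_0.
  - simpl pow_n. rewrite IH, (angle_S p k Hp), cos_plus, sin_plus, zeta_angle.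
    unfold mult; simpl; unfold Cmult; simpl. f_equal; ring.
Qed.

Lemma Im_rho p k : (0 < p)%nat ->
  Im (rho p k) = 2 * sqrt 2 * rho_radius p * sin (angle p k) / root_sqdist p (- rho_radius p) k.
Proof.
  intros Hp. unfold rho. rewrite pow_n_zeta by exact Hp. fold (rho_radius p).
  set (r := rho_radius p). set (c := cos (angle p k)). set (s := sin (angle p k)).
  replace (root_sqdist p (- r) k) with ((r * c + 1) ^ 2 + (r * s) ^ 2).
  - unfold Cminus, Cdiv, Cplus, Cmult, Cinv, Copp, RtoC, Im. simpl.
    rewrite !Rmult_0_l, !Rminus_0_r, !Rplus_0_r. unfold Rdiv. ring.
  - unfold root_sqdist. fold c. pose proof (sin2_cos2 (angle p k)) as Hsc. fold s c in Hsc.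
    unfold Rsqr in Hsc. nra.
Qed.

Lemma rho_radius_bounds p : (0 < p)%nat -> 0 < rho_radius p < 1.
Proof.
  intros Hp. unfold rho_radius, Rpower. split; [apply exp_pos|].
  pose proof (sqrt_lt_R0 2 ltac:(lra)).
  assert (0 < ln (1 + sqrt 2)) by (rewrite <- ln_1; apply ln_increasing; lra).
  assert (0 < / INR p) by (apply Rinv_0_lt_compat, lt_0_INR; lia).
  assert (0 < / INR p * ln (1 + sqrt 2)) by (apply Rmult_lt_0_compat; assumption).
  assert (Hneg : -2 / INR p * ln (1 + sqrt 2) < 0) by (unfold Rdiv; lra).
  pose proof (exp_increasing _ _ Hneg) as He. now rewrite exp_0 in He.
Qed.

Lemma rho_radius_pow p : (0 < p)%nat -> rho_radius p ^ p = / (1 + sqrt 2) ^ 2.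
Proof.
  intros Hp. assert (Ha : 0 < 1 + sqrt 2) by (pose proof (sqrt_pos 2); lra).
  unfold rho_radius. rewrite <- Rpower_pow by (unfold Rpower; apply exp_pos).
  rewrite Rpower_mult.
  replace (-2 / INR p * INR p) with (- INR 2) by (simpl; field; apply not_0_INR; lia).
  now rewrite Rpower_Ropp, Rpower_pow.
Qed.

Lemma silver_identity : (1 + / (1 + sqrt 2) ^ 2) ^ 2 = 8 * / (1 + sqrt 2) ^ 2.
Proof.
  assert (H2 : sqrt 2 * sqrt 2 = 2) by (apply sqrt_sqrt; lra).
  assert (0 <= sqrt 2) by apply sqrt_pos.
  field_simplify_eq; [nra | nra].
Qed.

Lemma prod_abs_sin_angle n : Nat.Odd n ->
  prodR (fun k => Rabs (sin (angle n k))) (seq 1 (n - 1)) * 2 ^ (n - 1) = INR n.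
Proof.
  intros Hodd. assert (Hn : (0 < n)%nat) by (destruct Hodd; lia).
  set (l := seq 1 (n - 1)). set (P := prodR (fun k => Rabs (sin (angle n k))) l).
  assert (Hsq : prodR (root_sqdist n 1) l * prodR (root_sqdist n (-1)) l = (P * 2 ^ (n - 1)) ^ 2).
  { rewrite <- prodR_mul.
    transitivity (prodR (fun k => (2 * Rabs (sin (angle n k))) * (2 * Rabs (sin (angle n k)))) l).
    - apply prodR_ext; intro k. unfold root_sqdist.
      pose proof (sin2_cos2 (angle n k)) as Hsc. unfold Rsqr in Hsc.
      assert (Habs : Rabs (sin (angle n k)) * Rabs (sin (angle n k))
                     = sin (angle n k) * sin (angle n k))
        by (rewrite <- Rabs_mult; apply Rabs_pos_eq; nra).
      nra.
    - rewrite prodR_mul, prodR_scale. unfold l; rewrite length_seq; fold l P.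
      set (t := 2 ^ (n - 1)). ring. }
  pose proof (CyclotomicProduct.prod_root_sqdist_at_1 n Hn) as H1.
  pose proof (CyclotomicProduct.prod_root_sqdist_mul n (-1) Hn) as Hm1.
  assert (Hsign : (-1) ^ n = -1).
  { destruct Hodd as [q Hq]. rewrite Hq.
    replace (2 * q + 1)%nat with (S (2 * q)) by lia. apply pow_1_odd. }
  rewrite Hsign in Hm1. fold l in H1, Hm1.
  assert (HS : 0 <= P * 2 ^ (n - 1)).
  { apply Rmult_le_pos; [apply prodR_nonneg; intro; apply Rabs_pos | apply pow_le; lra]. }
  pose proof (pos_INR n).
  apply Rsqr_inj; [exact HS | lra | unfold Rsqr; nra].
Qed.

Lemma prod_root_sqdist_neg_radius p : Nat.Odd p ->
  prodR (root_sqdist p (- rho_radius p)) (seq 1 (p - 1)) * (1 + rho_radius p) ^ 2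
  = 8 * rho_radius p ^ p.
Proof.
  intros Hodd. assert (Hp : (0 < p)%nat) by (destruct Hodd; lia).
  pose proof (CyclotomicProduct.prod_root_sqdist_mul p (- rho_radius p) Hp) as H.
  rewrite pow_opp_odd in H by exact Hodd.
  replace ((- rho_radius p - 1) ^ 2) with ((1 + rho_radius p) ^ 2) in H by ring.
  rewrite H, rho_radius_pow, <- silver_identity by exact Hp. ring.
Qed.

Lemma abs_Im_rho_mul p k : (0 < p)%nat ->
  Rabs (Im (rho p k)) * root_sqdist p (- rho_radius p) k
  = 2 * sqrt 2 * rho_radius p * Rabs (sin (angle p k)).
Proof.
  intros Hp. rewrite Im_rho by exact Hp.
  pose proof (rho_radius_bounds p Hp) as Hr. set (r := rho_radius p) in *.
  pose proof (root_sqdist_pos p (- r) k ltac:(lra)) as HQ.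
  pose proof (sqrt_lt_R0 2 ltac:(lra)).
  set (s := sin (angle p k)). set (Q := root_sqdist p (- r) k) in *.
  assert (Hc : 0 < 2 * sqrt 2 * r / Q) by (apply Rdiv_lt_0_compat; nra).
  replace (2 * sqrt 2 * r * s / Q) with (2 * sqrt 2 * r / Q * s) by (field; lra).
  rewrite Rabs_mult, (Rabs_pos_eq _ (Rlt_le _ _ Hc)). field. lra.
Qed.

Lemma prod_abs_im_rho_mul p : (0 < p)%nat ->
  prod_abs_im_rho p * prodR (root_sqdist p (- rho_radius p)) (seq 1 (p - 1))
  = (2 * sqrt 2 * rho_radius p) ^ (p - 1) * prodR (fun k => Rabs (sin (angle p k))) (seq 1 (p - 1)).
Proof.
  intros Hp. unfold prod_abs_im_rho. fold (prodR (fun k => Rabs (Im (rho p k))) (seq 1 (p - 1))).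
  rewrite <- prodR_mul.
  rewrite (prodR_ext _ (fun k => 2 * sqrt 2 * rho_radius p * Rabs (sin (angle p k)))).
  - now rewrite prodR_scale, length_seq.
  - intro k. now apply abs_Im_rho_mul.
Qed.

Lemma prod_abs_im_rho_odd p q : p = (2 * q + 1)%nat ->
  prod_abs_im_rho p = INR p * 2 ^ q * (1 + rho_radius p) ^ 2 / (8 * rho_radius p).
Proof.
  intros Hpq. assert (Hodd : Nat.Odd p) by (exists q; exact Hpq).
  assert (Hp : (0 < p)%nat) by lia.
  pose proof (prod_abs_im_rho_mul p Hp) as HI.
  pose proof (prod_root_sqdist_neg_radius p Hodd) as HQ.
  pose proof (prod_abs_sin_angle p Hodd) as HS.
  pose proof (rho_radius_bounds p Hp) as Hr.
  set (r := rho_radius p) in *. set (Q := prodR (root_sqdist p (- r)) (seq 1 (p - 1))) in *.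
  set (P := prodR (fun k => Rabs (sin (angle p k))) (seq 1 (p - 1))) in *.
  replace (p - 1)%nat with (2 * q)%nat in HI, HS by lia.
  rewrite pow_mult, !Rpow_mult_distr, pow2_sqrt in HI by lra.
  rewrite pow_mult in HS. rewrite Hpq, pow_add, pow_mult, pow_1 in HQ.
  set (T := 2 ^ q) in *. set (F := (2 ^ 2) ^ q) in *. set (u := (r ^ 2) ^ q) in *.
  assert (Hu : 0 < u) by (apply pow_lt, pow_lt; lra).
  assert (HQ0 : 0 < Q) by (assert (0 < (1 + r) ^ 2) by nra; nra).
  apply (Rmult_eq_reg_r Q); [| lra].
  rewrite HI. replace (F * T * u * P) with (T * u * (P * F)) by ring. rewrite HS.
  replace (INR p * T * (1 + r) ^ 2 / (8 * r) * Q) with (INR p * T * (Q * (1 + r) ^ 2) / (8 * r))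
    by (field; lra).
  rewrite HQ. field. lra.
Qed.

Theorem theorem6p1 (p : nat) (hp : prime (Z.of_nat p)) (hodd : Nat.Odd p) :
  prod_abs_im_rho p >= INR p * Rpower 2 ((INR p - 3) / 2).
Proof.
  destruct hodd as [q Hpq].
  pose proof (rho_radius_bounds p ltac:(lia)) as Hr.
  rewrite (prod_abs_im_rho_odd p q Hpq).
  replace (Rpower 2 ((INR p - 3) / 2)) with (2 ^ q / 2).
  2: { replace ((INR p - 3) / 2) with (INR q - 1)
         by (rewrite Hpq, plus_INR, mult_INR; simpl; field).
       unfold Rminus. rewrite Rpower_plus, Rpower_Ropp, Rpower_1, Rpower_pow by lra. field. }
  set (r := rho_radius p) in *.
  replace (INR p * (2 ^ q / 2)) with (INR p * 2 ^ q * (4 * r) / (8 * r)) by (field; lra).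
  apply Rle_ge, Rmult_le_compat_r; [left; apply Rinv_0_lt_compat; lra |].
  apply Rmult_le_compat_l; [| nra].
  apply Rmult_le_pos; [apply pos_INR | apply pow_le; lra].
Qed.
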